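(* Let $\mathcal G$ be a Lie superalgebra over a field of characteristic zero, with a direct sum decomposition $\mathcal G=\mathcal H\oplus\mathcal E$ of vector spaces where $\mathcal H$ is a subalgebra. Let $\mathcal S$, the projections $A\mapsto A_{\mathcal H}$, and the extended bracket $[\cdot,\cdot]$ be as described below. Then for any $A,B\in\mathcal S$, $[A_{\mathcal H},B_{\mathcal H}]=[A_{\mathcal H},B_{\mathcal H}]_{\mathcal H}$. Thus the subspace $\mathcal S_{\mathcal H}$ of the Lie superalgebra $(\mathcal S,[\cdot,\cdot])$ is a subalgebra.
   Context: Set $\mathcal U_1=\mathcal G$ with its $\mathbb Z_2$-grading. For $p\ge1$ define recursively $\mathcal U_{-p+1}=\mathrm{Hom}(\mathcal U_1,\mathcal U_{-p+2})$, $\mathbb Z_2$-graded by declaring $A$ even (resp. odd) if it preserves (resp. reverses) parity; $|u|$ is the parity of a homogeneous element. Elements of $\mathcal U_{1-p}$ are operators of order $p$ (elements of $\mathcal G$ have order $0$), identified for $p\ge1$ with $p$-linear maps $A(x_1,\dots,x_p)=A(x_1)\cdots(x_p)$; $\mathcal U_{1-}=\bigoplus_{p\ge0}\mathcal U_{1-p}$. An operator of order $p\ge2$ is symmetric if $A(\dots,x_i,x_{i+1},\dots)=(-1)^{|x_i||x_{i+1}|}A(\dots,x_{i+1},x_i,\dots)$ for all homogeneous arguments and all $i$; operators of order $0$ or $1$ are symmetric; $\mathcal S$ is the span of symmetric operators. Define $\circ$: $A\circ y=A(y)$, $y\circ A=0$ for $A$ of order $\ge1$, $y\in\mathcal U_1$;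 for $A,B$ of orders $\ge1$, recursively $(A\circ B)(x)=A\circ B(x)+(-1)^{|B||x|}A(x)\circ B$. Define $\bullet$: $A_p\bullet B_q=\frac{p!q!}{(p+q-1)!}A_p\circ B_q$ for orders $p,q\ge1$; $A_p\bullet x=pA_p(x)$, $x\bullet A_p=0$, $x\bullet y=0$ for $x,y\in\mathcal U_1$. The bracket of $\mathcal G$ extends to $\mathcal U_{1-}$: on $\mathcal G$ it is the given bracket, and for operators $A,B$ of orders $p,q$ with $p+q\ge1$, $[A,B]$ is the operator of order $p+q$ defined recursively by $[A,B]\bullet x=[A,B\bullet x]+(-1)^{|x||B|}[A\bullet x,B]$ for all $x\in\mathcal G$; $\mathcal S$ is closed under this bracket. For $x\in\mathcal G$ write $x=x_{\mathcal H}+x_{\mathcal E}$ with $x_{\mathcal H}\in\mathcal H$, $x_{\mathcal E}\in\mathcal E$. For an operator $A$ of order $\ge1$ define $A_{\mathcal H},A_{\mathcal E}$ recursively by $A_{\mathcal H}\bullet x=(A\bullet x)_{\mathcal H}$, $A_{\mathcal E}\bullet x=(A\bullet x)_{\mathcal E}$ for all $x\in\mathcal G$ (equivalently $A_{\mathcal H}(x_1,\dots,x_p)=(A(x_1,\dots,x_p))_{\mathcal H}$, similarly for $\mathcal E$). $\mathcal S_{\mathcal H}$ (resp. $\mathcal S_{\mathcal E}$) is the span of all $A_{\mathcal H}$ (resp. $A_{\mathcal E}$) with $A\in\mathcal S$. *)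

From HB Require Import structures.
From mathcomp Require Import all_boot all_order all_algebra.
Set Implicit Arguments. Unset Strict Implicit. Unset Printing Implicit Defensive.
Import Order.TTheory GRing.Theory Num.Theory.
Local Open Scope ring_scope.

(* Conventions:
   - G : lmodType K is the underlying vector space; its Z2-grading is given by
     the two parity projections  par false  (onto G_0) and  par true (onto G_1).
   - br : G -> G -> G is the super bracket.
   - The decomposition G = H (+) E is given by the projection pH : x |-> x_H
     (H = image of pH, E = kernel of pH, x_E = x - x_H).
   - An operator of order p is a p-linear map G^p -> G, represented as a
     function  Op := seq G -> G  of which only the values on sequences of
     length p matter; A(x1,...,xp) = A [:: x1; ...; xp] = A(x1)...(xp).
     An operator of order 0 (an element g of G = U_1) is the function whose
     value at [::] is g.
   - An element of U_{1-} = (+)_p U_{1-p} is a finitely supported family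
     A : nat -> Op whose p-th component is an operator of order p. *)

Section SuperDefs.
Variable K : fieldType.
Variable G : lmodType K.

Definition Op := seq G -> G.

Definition is_grading (par : bool -> G -> G) : Prop :=
  [/\ forall b, linear (par b),
      forall b x, par b (par b x) = par b x,
      forall b x, par b (par (~~ b) x) = 0
    & forall x, par false x + par true x = x].

Definition homog (par : bool -> G -> G) (b : bool) (x : G) : Prop :=
  par b x = x.

Definition sgn (b : bool) : K := (-1) ^+ b.

Definition is_lie_superalgebra (par : bool -> G -> G) (br : G -> G -> G) : Prop :=
  is_grading par /\
  [/\ forall y, linear (br ^~ y),
      forall x, linear (br x),
      forall a b x y, homog par a x -> homog par b y -> homog par (a (+) b) (br x y),
      forall a b x y, homog par a x -> homog par b y ->
        br x y = - (sgn (a && b) *: br y x)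
    &
      forall a b x y z, homog par a x -> homog par b y ->
        br x (br y z) = br (br x y) z + sgn (a && b) *: br y (br x z)].

Definition is_subalgebra_decomp (par : bool -> G -> G) (br : G -> G -> G)
    (pH : G -> G) : Prop :=
  [/\ linear pH,
      forall x, pH (pH x) = pH x,
      forall b x, pH (par b (pH x)) = par b (pH x)
    &
      forall x y, pH (br (pH x) (pH y)) = br (pH x) (pH y)].

Definition multilinear (p : nat) (A : Op) : Prop :=
  forall (xs ys : seq G) (k : K) (x y : G), ((size xs + size ys).+1 = p)%N ->
    A (xs ++ (k *: x + y) :: ys) = k *: A (xs ++ x :: ys) + A (xs ++ y :: ys).

Definition symmetric (par : bool -> G -> G) (p : nat) (A : Op) : Prop :=
  forall (xs ys : seq G) (x y : G) (c d : bool), ((size xs + size ys).+2 = p)%N ->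
    A (xs ++ par c x :: par d y :: ys)
    = sgn (c && d) *: A (xs ++ par d y :: par c x :: ys).

(* the parity-b component of an operator: on homogeneous arguments
   x1,...,xp it is the component of A(x1,...,xp) of parity b + sum |xi|. *)
Fixpoint opart (par : bool -> G -> G) (b : bool) (B : Op) (xs : seq G) : G :=
  match xs with
  | [::] => par b (B [::])
  | x :: rest => \sum_(c : bool) opart par (b (+) c) (fun ys => B (par c x :: ys)) rest
  end.

Definition bullet (p : nat) (A : Op) (x : G) : Op :=
  fun ys => p%:R *: A (x :: ys).

(* [A, B] for A of order p, B of order q and B homogeneous of parity b,
   evaluated at xs (of length p + q).  Defined by the recursion
     [A,B] . x = [A, B . x] + (-1)^{|x||B|} [A . x, B]   (x homogeneous)
   where [A,B] . x = (p+q) [A,B](x), and y . C = 0 for y of order 0;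
   the base case (p = q = 0) is the bracket of G. *)
Fixpoint brk (par : bool -> G -> G) (br : G -> G -> G) (xs : seq G)
    (p q : nat) (b : bool) (A B : Op) : G :=
  match xs with
  | [::] => br (A [::]) (B [::])
  | x :: rest =>
      (p + q)%N%:R^-1 *: \sum_(c : bool)
        ((if q is q'.+1 then
            brk par br rest p q' (b (+) c) A (bullet q B (par c x)) else 0)
         + sgn (c && b) *:
           (if p is p'.+1 then
              brk par br rest p' q b (bullet p A (par c x)) B else 0))
  end.

(* the bracket of operators of orders p and q, extended bilinearly
   (B split into its homogeneous components) *)
Definition opbr (par : bool -> G -> G) (br : G -> G -> G)
    (p q : nat) (A B : Op) : Op :=
  fun xs => \sum_(b : bool) brk par br xs p q b A (opart par b B).

Definition Uop := nat -> Op.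

Definition in_U (A : Uop) : Prop :=
  (forall p, multilinear p (A p)) /\
  exists N, forall p, (N <= p)%N -> forall xs, size xs = p -> A p xs = 0.

(* S = span of the symmetric operators: an element of U_{1-} all of whose
   homogeneous-order components are symmetric *)
Definition in_S (par : bool -> G -> G) (A : Uop) : Prop :=
  in_U A /\ forall p, symmetric par p (A p).

Definition Ubr (par : bool -> G -> G) (br : G -> G -> G) (A B : Uop) : Uop :=
  fun n xs => \sum_(i < n.+1) opbr par br i (n - i)%N (A i) (B (n - i)%N) xs.

Definition UprojH (pH : G -> G) (A : Uop) : Uop := fun p xs => pH (A p xs).

(* equality in U_{1-} (operators of order p are determined by their values
   on sequences of length p) *)
Definition Ueq (A B : Uop) : Prop :=
  forall p xs, size xs = p -> A p xs = B p xs.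

End SuperDefs.

From Pilot Require Import Defs.
From HB Require Import structures.
From mathcomp Require Import all_boot all_order all_algebra.
From mathcomp Require Import ring zify.
Set Implicit Arguments. Unset Strict Implicit. Unset Printing Implicit Defensive.
Import Order.TTheory GRing.Theory Num.Theory.
Local Open Scope ring_scope.

(* If A and B take values in H, so does every term of the recursion defining
   [A, B]: the base case brackets two elements of the subalgebra H, bullets
   only rescale values, and homogeneous components stay in H because H is
   graded.  Hence [A_H, B_H] = [A_H, B_H]_H, and C := [A_H, B_H] is the
   required element of S once S is known to be closed under A |-> A_H and
   under the bracket.  The latter is the substantial part: the bracket of
   multilinear symmetric operators is multilinear and symmetric.  For symmetry
   in two adjacent homogeneous arguments x, y, expand the recursion twice at
   them; of the four resulting terms, [A, B.x.y] and [A.x.y, B] are symmetric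
   by the symmetry of A and B, while the cross terms [A.x, B.y] and
   [A.y, B.x] are exchanged, with matching super signs. *)

Section LinearMaps.
Variables (K : fieldType) (G : lmodType K) (f : G -> G).
Hypothesis f_lin : linear f.

Lemma linear_map0 : f 0 = 0.
Proof.
have := f_lin 1 0 0; rewrite !scale1r !addr0 => f0.
by apply: (@addrI _ (f 0)); rewrite addr0 -f0.
Qed.

Lemma linear_mapD u v : f (u + v) = f u + f v.
Proof. by have := f_lin 1 u v; rewrite !scale1r. Qed.

Lemma linear_mapZ k u : f (k *: u) = k *: f u.
Proof. by have := f_lin k u 0; rewrite !addr0 linear_map0 addr0. Qed.

Lemma linear_fixed_sum (I : Type) (r : seq I) (P : pred I) (F : I -> G) :
  (forall i, f (F i) = F i) -> f (\sum_(i <- r | P i) F i) = \sum_(i <- r | P i) F i.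
Proof.
move=> fF; apply: (big_ind (fun u => f u = u)) => // [|u v fu fv].
  exact: linear_map0.
by rewrite linear_mapD fu fv.
Qed.

Lemma linear_fixedZ k u : f u = u -> f (k *: u) = k *: u.
Proof. by rewrite linear_mapZ => ->. Qed.

End LinearMaps.

Section Operators.
Variables (K : fieldType) (G : lmodType K).
Implicit Types (A B : Op G) (x : G) (xs ys : seq G).

Lemma multilinear_zero n A xs ys :
  multilinear n A -> (size xs + size ys).+1 = n -> A (xs ++ 0 :: ys) = 0.
Proof.
move=> A_ml sz; have := A_ml xs ys 1 0 0 sz; rewrite !scale1r !addr0 => A0.
by apply: (@addrI _ (A (xs ++ 0 :: ys))); rewrite addr0 -A0.
Qed.

Lemma multilinear_cons n A x :
  multilinear n.+1 A -> multilinear n (fun ys => A (x :: ys)).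
Proof. by move=> A_ml xs ys k u v sz; apply: (A_ml (x :: xs)); rewrite /= addSn sz. Qed.

Lemma multilinear_bullet n m A x :
  multilinear n.+1 A -> multilinear n (bullet m A x).
Proof.
move=> /(multilinear_cons x) A_ml xs ys k u v sz.
by rewrite /bullet A_ml // scalerDr !scalerA mulrC.
Qed.

Lemma multilinear_sum n (I : Type) (r : seq I) (P : pred I) (F : I -> Op G) :
  (forall i, multilinear n (F i)) ->
  multilinear n (fun xs => \sum_(i <- r | P i) F i xs).
Proof.
move=> F_ml xs ys k u v sz; rewrite scaler_sumr -big_split.
by apply: eq_bigr => i _; apply: F_ml.
Qed.

Lemma bullet_lin n m A k u v ys :
  multilinear n.+1 A -> size ys = n ->
  bullet m A (k *: u + v) ys = k *: bullet m A u ys + bullet m A v ys.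
Proof.
by move=> A_ml sz; rewrite /bullet (A_ml [::]) ?sz // scalerDr !scalerA mulrC.
Qed.

Lemma bullet0n A x ys : bullet 0 A x ys = 0.
Proof. exact: scale0r. Qed.

Lemma bulletn0 n m A ys : multilinear n.+1 A -> size ys = n -> bullet m A 0 ys = 0.
Proof.
by move=> A_ml sz; rewrite /bullet (multilinear_zero (xs := [::]) A_ml) ?sz ?scaler0.
Qed.

Variable par : bool -> G -> G.

Lemma symmetric_cons n A x :
  Defs.symmetric par n.+1 A -> Defs.symmetric par n (fun ys => A (x :: ys)).
Proof. by move=> A_sym xs ys u v c d sz; apply: (A_sym (x :: xs)); rewrite /= addSn sz. Qed.

Lemma symmetric_bullet n m A x :
  Defs.symmetric par n.+1 A -> Defs.symmetric par n (bullet m A x).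
Proof.
move=> /(symmetric_cons x) A_sym xs ys u v c d sz.
by rewrite /bullet A_sym // !scalerA mulrC.
Qed.

Lemma symmetric_sum n (I : Type) (r : seq I) (P : pred I) (F : I -> Op G) :
  (forall i, Defs.symmetric par n (F i)) ->
  Defs.symmetric par n (fun xs => \sum_(i <- r | P i) F i xs).
Proof.
move=> F_sym xs ys u v c d sz; rewrite scaler_sumr.
by apply: eq_bigr => i _; apply: F_sym.
Qed.

Lemma symmetric_bullet2 n m1 m2 A c x d y ys :
  Defs.symmetric par n.+2 A -> size ys = n ->
  bullet m1 (bullet m2 A (par c x)) (par d y) ys
  = sgn K (c && d) *: bullet m1 (bullet m2 A (par d y)) (par c x) ys.
Proof.
move=> A_sym sz; rewrite /bullet (A_sym [::]) ?sz //.
by rewrite !scalerA; congr (_ *: _); ring.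
Qed.

End Operators.

Lemma sum_signed_pair_lin (K : fieldType) (G : lmodType K) (n k : K) (s : bool -> K)
    (F F1 F2 H H1 H2 : bool -> G) :
  (forall c, F c = k *: F1 c + F2 c) -> (forall c, H c = k *: H1 c + H2 c) ->
  n *: \sum_(c : bool) (F c + s c *: H c)
  = k *: (n *: \sum_(c : bool) (F1 c + s c *: H1 c))
    + n *: \sum_(c : bool) (F2 c + s c *: H2 c).
Proof.
move=> EF EH; rewrite scalerA mulrC -scalerA -scalerDr; congr (_ *: _).
rewrite scaler_sumr -big_split; apply: eq_bigr => c _.
by rewrite EF EH !scalerDr !scalerA mulrC addrACA.
Qed.

Lemma sum_signed_pair_scale (K : fieldType) (G : lmodType K) (n k : K) (s : bool -> K)
    (F F1 H H1 : bool -> G) :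
  (forall c, F c = k *: F1 c) -> (forall c, H c = k *: H1 c) ->
  n *: \sum_(c : bool) (F c + s c *: H c) = k *: (n *: \sum_(c : bool) (F1 c + s c *: H1 c)).
Proof.
move=> EF EH; rewrite scalerA mulrC -scalerA; congr (_ *: _).
by rewrite scaler_sumr; apply: eq_bigr => c _; rewrite EF EH scalerDr !scalerA mulrC.
Qed.

Section Bracket.
Variables (K : fieldType) (G : lmodType K).
Variables (par : bool -> G -> G) (br : G -> G -> G).
Hypothesis par_lin : forall b, linear (par b).
Hypothesis par_idem : forall b x, par b (par b x) = par b x.
Hypothesis par_orth : forall b x, par b (par (~~ b) x) = 0.
Hypothesis br_linl : forall y, linear (br ^~ y).
Hypothesis br_linr : forall x, linear (br x).

Local Notation brk := (Defs.brk par br).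
Implicit Types (A B : Op G) (x y : G) (xs ys zs : seq G).

Definition brk_bulletB xs p q b A B z : G :=
  if q is q'.+1 then brk xs p q' b A (bullet q B z) else 0.

Definition brk_bulletA xs p q b A B z : G :=
  if p is p'.+1 then brk xs p' q b (bullet p A z) B else 0.

Lemma brk_cons x xs p q b A B :
  brk (x :: xs) p q b A B
  = (p + q)%:R^-1 *: \sum_(c : bool)
      (brk_bulletB xs p q (b (+) c) A B (par c x)
       + sgn K (c && b) *: brk_bulletA xs p q b A B (par c x)).
Proof. by []. Qed.

Lemma brk_linr xs p q b A B B1 B2 k :
  size xs = (p + q)%N -> (forall ys, size ys = q -> B ys = k *: B1 ys + B2 ys) ->
  brk xs p q b A B = k *: brk xs p q b A B1 + brk xs p q b A B2.
Proof.
elim: xs p q b A B B1 B2 => [|x xs IH] p q b A B B1 B2 /= sz EB.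
  have q0 : q = 0%N by lia.
  by rewrite EB ?br_linr ?q0.
apply: sum_signed_pair_lin => c; rewrite /brk_bulletB /brk_bulletA.
  case: q sz EB => [|q] sz EB; first by rewrite scaler0 addr0.
  apply: IH; first by lia.
  by move=> ys sz_ys; rewrite /bullet EB /= ?sz_ys // scalerDr !scalerA mulrC.
case: p sz => [|p] sz; first by rewrite scaler0 addr0.
by apply: IH => //; lia.
Qed.

Lemma brk_linl xs p q b A A1 A2 B k :
  size xs = (p + q)%N -> (forall ys, size ys = p -> A ys = k *: A1 ys + A2 ys) ->
  brk xs p q b A B = k *: brk xs p q b A1 B + brk xs p q b A2 B.
Proof.
elim: xs p q b A A1 A2 B => [|x xs IH] p q b A A1 A2 B /= sz EA.
  have p0 : p = 0%N by lia.
  by rewrite EA ?br_linl ?p0.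
apply: sum_signed_pair_lin => c; rewrite /brk_bulletB /brk_bulletA.
  case: q sz => [|q] sz; first by rewrite scaler0 addr0.
  by apply: IH => //; lia.
case: p sz EA => [|p] sz EA; first by rewrite scaler0 addr0.
apply: IH; first by lia.
by move=> ys sz_ys; rewrite /bullet EA /= ?sz_ys // scalerDr !scalerA mulrC.
Qed.

Lemma brk_scaler xs p q b A B B1 k :
  size xs = (p + q)%N -> (forall ys, size ys = q -> B ys = k *: B1 ys) ->
  brk xs p q b A B = k *: brk xs p q b A B1.
Proof.
move=> sz EB; rewrite (@brk_linr xs p q b A B B1 B1 (k - 1)) ?scalerBl ?scale1r ?subrK //.
by move=> ys /EB ->; rewrite scalerBl scale1r subrK.
Qed.

Lemma brk_scalel xs p q b A A1 B k :
  size xs = (p + q)%N -> (forall ys, size ys = p -> A ys = k *: A1 ys) ->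
  brk xs p q b A B = k *: brk xs p q b A1 B.
Proof.
move=> sz EA; rewrite (@brk_linl xs p q b A A1 A1 B (k - 1)) ?scalerBl ?scale1r ?subrK //.
by move=> ys /EA ->; rewrite scalerBl scale1r subrK.
Qed.

Lemma brk_vanishr xs p q b A B :
  size xs = (p + q)%N -> (forall ys, size ys = q -> B ys = 0) -> brk xs p q b A B = 0.
Proof.
move=> sz B0; rewrite (@brk_scaler xs p q b A B B 0) ?scale0r //.
by move=> ys /B0 ->; rewrite scale0r.
Qed.

Lemma brk_vanishl xs p q b A B :
  size xs = (p + q)%N -> (forall ys, size ys = p -> A ys = 0) -> brk xs p q b A B = 0.
Proof.
move=> sz A0; rewrite (@brk_scalel xs p q b A A B 0) ?scale0r //.
by move=> ys /A0 ->; rewrite scale0r.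
Qed.

Lemma brk0r xs p q b A B : (forall ys, B ys = 0) -> brk xs p q b A B = 0.
Proof.
elim: xs p q b A B => [|x xs IH] p q b A B B0 /=.
  by rewrite B0 (linear_map0 (br_linr _)).
rewrite big1 ?scaler0 // => c _; case: q => [|q]; case: p => [|p];
  by rewrite ?IH ?scaler0 ?addr0 // => ys; rewrite /bullet B0 scaler0.
Qed.

Lemma brk0l xs p q b A B : (forall ys, A ys = 0) -> brk xs p q b A B = 0.
Proof.
elim: xs p q b A B => [|x xs IH] p q b A B A0 /=.
  by rewrite A0 (linear_map0 (br_linl _)).
rewrite big1 ?scaler0 // => c _; case: q => [|q]; case: p => [|p];
  by rewrite ?IH ?scaler0 ?addr0 // => ys; rewrite /bullet A0 scaler0.
Qed.

Lemma brk_bulletB0 xs p q b A B :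
  multilinear q B -> (size xs).+1 = (p + q)%N -> brk_bulletB xs p q b A B 0 = 0.
Proof.
case: q => [|q] //= B_ml sz; apply: brk_vanishr => [|ys]; first by lia.
exact: bulletn0.
Qed.

Lemma brk_bulletA0 xs p q b A B :
  multilinear p A -> (size xs).+1 = (p + q)%N -> brk_bulletA xs p q b A B 0 = 0.
Proof.
case: p => [|p] //= A_ml sz; apply: brk_vanishl => [|ys]; first by lia.
exact: bulletn0.
Qed.

Lemma par_orthC c x : par (~~ c) (par c x) = 0.
Proof. by have := par_orth (~~ c) x; rewrite negbK. Qed.

Lemma brk_cons_homog xs p q b A B c x :
  multilinear p A -> multilinear q B -> (size xs).+1 = (p + q)%N ->
  brk (par c x :: xs) p q b A B
  = (p + q)%:R^-1 *: (brk_bulletB xs p q (b (+) c) A B (par c x)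
                      + sgn K (c && b) *: brk_bulletA xs p q b A B (par c x)).
Proof.
move=> A_ml B_ml sz; rewrite brk_cons big_bool; congr (_ *: _).
have other_parity_vanishes :
    brk_bulletB xs p q (b (+) ~~ c) A B (par (~~ c) (par c x))
    + sgn K (~~ c && b) *: brk_bulletA xs p q b A B (par (~~ c) (par c x)) = 0.
  by rewrite par_orthC brk_bulletB0 // brk_bulletA0 // scaler0 addr0.
by case: c other_parity_vanishes => /= ->; rewrite par_idem ?addr0 ?add0r.
Qed.

Lemma brk_bulletB_cons xs p q e A B c x d y :
  multilinear p A -> multilinear q B -> (size xs).+2 = (p + q)%N ->
  brk_bulletB (par d y :: xs) p q e A B (par c x)
  = (p + q).-1%:R^-1 *:
      (brk_bulletB xs p q.-1 (e (+) d) A (bullet q B (par c x)) (par d y)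
       + sgn K (d && e) *: brk_bulletA xs p q.-1 e A (bullet q B (par c x)) (par d y)).
Proof.
move=> A_ml B_ml sz; case: q B_ml sz => [|q] B_ml sz.
  case: p {A_ml sz} => [|p] /=; first by rewrite scaler0 addr0 scaler0.
  by rewrite brk0r => [|ys]; rewrite ?scaler0 ?addr0 ?scaler0 ?bullet0n.
rewrite {1}/brk_bulletB brk_cons_homog ?addnS //; last by lia.
exact: multilinear_bullet.
Qed.

Lemma brk_bulletA_cons xs p q b A B c x d y :
  multilinear p A -> multilinear q B -> (size xs).+2 = (p + q)%N ->
  brk_bulletA (par d y :: xs) p q b A B (par c x)
  = (p + q).-1%:R^-1 *:
      (brk_bulletB xs p.-1 q (b (+) d) (bullet p A (par c x)) B (par d y)
       + sgn K (d && b) *: brk_bulletA xs p.-1 q b (bullet p A (par c x)) B (par d y)).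
Proof.
move=> A_ml B_ml sz; case: p A_ml sz => [|p] A_ml sz.
  case: q {B_ml sz} => [|q] /=; first by rewrite scaler0 addr0 scaler0.
  by rewrite brk0l => [|ys]; rewrite ?scaler0 ?addr0 ?scaler0 ?bullet0n.
rewrite {1}/brk_bulletA brk_cons_homog //; last by lia.
exact: multilinear_bullet.
Qed.

Lemma brk_bullet_cross xs p q e A B z w :
  brk_bulletA xs p q.-1 e A (bullet q B z) w = brk_bulletB xs p.-1 q e (bullet p A w) B z.
Proof.
case: p => [|p]; case: q => [|q] //=.
- by rewrite brk0l => // ys; rewrite bullet0n.
- by rewrite brk0r => // ys; rewrite bullet0n.
Qed.

(* The sign bookkeeping of [brk_swap_head]: [a], [w] stand for [A, B.x.y],
   [A.x.y, B], and the cross terms [u], [v] trade places. *)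
Lemma brk_swap_signs (n m : K) (b c d : bool) (a a' u v w w' : G) :
  a = sgn K (c && d) *: a' -> w = sgn K (c && d) *: w' ->
  n *: (m *: (a + sgn K (d && (b (+) c)) *: u)
        + sgn K (c && b) *: (m *: (v + sgn K (d && b) *: w)))
  = sgn K (c && d) *: (n *: (m *: (a' + sgn K (c && (b (+) d)) *: v)
        + sgn K (d && b) *: (m *: (u + sgn K (c && b) *: w')))).
Proof.
move=> -> ->; rewrite !scalerDr !scalerA [in RHS]addrACA.
by congr (_ *: _ + _ *: _ + (_ *: _ + _ *: _));
  case: b; case: c; case: d; rewrite /sgn /=; ring.
Qed.

Lemma brk_swap_head ys p q b A B c x d y :
  multilinear p A -> multilinear q B ->
  Defs.symmetric par p A -> Defs.symmetric par q B -> (size ys).+2 = (p + q)%N ->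
  brk (par c x :: par d y :: ys) p q b A B
  = sgn K (c && d) *: brk (par d y :: par c x :: ys) p q b A B.
Proof.
move=> A_ml B_ml A_sym B_sym sz.
rewrite !brk_cons_homog //=.
rewrite !brk_bulletB_cons // !brk_bulletA_cons // !brk_bullet_cross.
apply: brk_swap_signs; rewrite /brk_bulletB /brk_bulletA.
  case: q B_ml B_sym sz => [|[|q]] B_ml B_sym sz; rewrite ?scaler0 //=.
  rewrite addbAC; apply: brk_scaler => [|zs sz_zs]; first by lia.
  exact: symmetric_bullet2 B_sym sz_zs.
case: p A_ml A_sym sz => [|[|p]] A_ml A_sym sz; rewrite ?scaler0 //=.
apply: brk_scalel => [|zs sz_zs]; first by lia.
exact: symmetric_bullet2 A_sym sz_zs.
Qed.

Lemma brk_symmetric xs ys p q b A B x y c d :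
  multilinear p A -> multilinear q B ->
  Defs.symmetric par p A -> Defs.symmetric par q B ->
  (size xs + size ys).+2 = (p + q)%N ->
  brk (xs ++ par c x :: par d y :: ys) p q b A B
  = sgn K (c && d) *: brk (xs ++ par d y :: par c x :: ys) p q b A B.
Proof.
elim: xs p q b A B => [|z xs IH] p q b A B A_ml B_ml A_sym B_sym sz.
  exact: brk_swap_head.
rewrite !cat_cons !brk_cons; apply: sum_signed_pair_scale => e.
  case: q B_ml B_sym sz => [|q] B_ml B_sym sz; first by rewrite scaler0.
  apply: IH => //; [exact: multilinear_bullet | exact: symmetric_bullet |].
  by move: sz => /=; lia.
case: p A_ml A_sym sz => [|p] A_ml A_sym sz; first by rewrite scaler0.
apply: IH => //; [exact: multilinear_bullet | exact: symmetric_bullet |].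
by move: sz => /=; lia.
Qed.

Lemma brk_lin_head ys p q b A B k u v :
  multilinear p A -> multilinear q B -> (size ys).+1 = (p + q)%N ->
  brk ((k *: u + v) :: ys) p q b A B = k *: brk (u :: ys) p q b A B + brk (v :: ys) p q b A B.
Proof.
move=> A_ml B_ml sz; rewrite !brk_cons; apply: sum_signed_pair_lin => c; rewrite par_lin.
  case: q B_ml sz => [|q] B_ml sz; first by rewrite scaler0 addr0.
  apply: brk_linr => [|zs sz_zs]; [by lia | exact: bullet_lin B_ml sz_zs].
case: p A_ml sz => [|p] A_ml sz; first by rewrite scaler0 addr0.
apply: brk_linl => [|zs sz_zs]; [by lia | exact: bullet_lin A_ml sz_zs].
Qed.

Lemma multilinear_brk p q b A B :
  multilinear p A -> multilinear q B -> multilinear (p + q) (fun xs => brk xs p q b A B).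
Proof.
move=> + + xs; elim: xs p q b A B => [|z xs IH] p q b A B A_ml B_ml ys k u v sz.
  exact: brk_lin_head.
rewrite !cat_cons !brk_cons; apply: sum_signed_pair_lin => e.
  case: q B_ml sz => [|q] B_ml sz; first by rewrite scaler0 addr0.
  by apply: IH => //; [exact: multilinear_bullet | move: sz => /=; lia].
case: p A_ml sz => [|p] A_ml sz; first by rewrite scaler0 addr0.
by apply: IH => //; [exact: multilinear_bullet | move: sz => /=; lia].
Qed.

Lemma symmetric_brk p q b A B :
  multilinear p A -> multilinear q B ->
  Defs.symmetric par p A -> Defs.symmetric par q B ->
  Defs.symmetric par (p + q) (fun xs => brk xs p q b A B).
Proof. by move=> A_ml B_ml A_sym B_sym xs ys x y c d; apply: brk_symmetric. Qed.

Local Notation opart := (Defs.opart par).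

Lemma opart_lin xs b B B1 B2 k :
  (forall ys, size ys = size xs -> B ys = k *: B1 ys + B2 ys) ->
  opart b B xs = k *: opart b B1 xs + opart b B2 xs.
Proof.
elim: xs b B B1 B2 => [|x xs IH] b B B1 B2 /= EB; first by rewrite EB // par_lin.
rewrite scaler_sumr -big_split; apply: eq_bigr => c _; apply: IH => ys sz.
by apply: EB; rewrite /= sz.
Qed.

Lemma opart_scale xs b B B1 k :
  (forall ys, size ys = size xs -> B ys = k *: B1 ys) -> opart b B xs = k *: opart b B1 xs.
Proof.
move=> EB; rewrite (@opart_lin xs b B B1 B1 (k - 1)) ?scalerBl ?scale1r ?subrK //.
by move=> ys /EB ->; rewrite scalerBl scale1r subrK.
Qed.

Lemma opart_vanish xs b B : (forall ys, size ys = size xs -> B ys = 0) -> opart b B xs = 0.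
Proof.
move=> B0; rewrite (@opart_scale xs b B B 0) ?scale0r //.
by move=> ys /B0 ->; rewrite scale0r.
Qed.

Lemma opart_cons_homog xs b B c x :
  multilinear (size xs).+1 B ->
  opart b B (par c x :: xs) = opart (b (+) c) (fun ys => B (par c x :: ys)) xs.
Proof.
move=> B_ml /=; rewrite big_bool /=.
have other_parity_vanishes :
    opart (b (+) ~~ c) (fun ys => B (par (~~ c) (par c x) :: ys)) xs = 0.
  rewrite par_orthC; apply: opart_vanish => ys sz.
  by rewrite (multilinear_zero (xs := [::]) B_ml) ?sz.
by case: c other_parity_vanishes => /= ->; rewrite par_idem ?addr0 ?add0r.
Qed.

Lemma multilinear_opart n b B : multilinear n B -> multilinear n (opart b B).
Proof.
move=> + xs; elim: xs n b B => [|z xs IH] n b B B_ml ys k u v sz /=.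
  rewrite scaler_sumr -big_split; apply: eq_bigr => c _.
  by rewrite par_lin; apply: opart_lin => zs sz_zs; apply: (B_ml [::]); rewrite /= sz_zs.
case: n B_ml sz => [|n] B_ml //= sz.
rewrite scaler_sumr -big_split; apply: eq_bigr => c _.
by apply: (IH n); [exact: multilinear_cons | lia].
Qed.

Lemma symmetric_opart n b B :
  multilinear n B -> Defs.symmetric par n B -> Defs.symmetric par n (opart b B).
Proof.
move=> + + xs; elim: xs n b B => [|z xs IH] n b B B_ml B_sym ys x y c d sz.
  rewrite /= add0n in sz; subst n; rewrite !cat0s.
  rewrite (opart_cons_homog (xs := par d y :: ys)) //.
  rewrite (opart_cons_homog (xs := par c x :: ys)) //.
  rewrite opart_cons_homog; last exact: multilinear_cons.
  rewrite opart_cons_homog; last exact: multilinear_cons.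
  by rewrite addbAC; apply: opart_scale => zs sz_zs; apply: (B_sym [::]); rewrite /= sz_zs.
case: n B_ml B_sym sz => [|n] B_ml B_sym //= sz.
rewrite /= scaler_sumr; apply: eq_bigr => c' _.
by apply: (IH n); [exact: multilinear_cons | exact: symmetric_cons | lia].
Qed.

Lemma Ubr_in_S (A B : Uop G) : in_S par A -> in_S par B -> in_S par (Ubr par br A B).
Proof.
move=> [[A_ml [NA A_fin]] A_sym] [[B_ml [NB B_fin]] B_sym].
have orders_add n (i : 'I_n.+1) : (i + (n - i))%N = n by rewrite subnKC // -ltnS.
split; first split.
- move=> n; apply: multilinear_sum => i; apply: multilinear_sum => b.
  rewrite -{1}(orders_add n i); apply: multilinear_brk => //.
  exact: multilinear_opart.
- exists (NA + NB)%N => n n_ge xs sz.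
  rewrite /Ubr big1 // => i _; rewrite /opbr big1 // => b _.
  have := orders_add n i; case: (leqP NA i) => [A_i0|B_0] sz_n.
    by apply: brk_vanishl => [|ys sz_ys]; [lia | exact: A_fin].
  apply: brk_vanishr => [|ys sz_ys]; first by lia.
  by apply: opart_vanish => zs sz_zs; apply: B_fin; lia.
- move=> n; apply: symmetric_sum => i; apply: symmetric_sum => b.
  rewrite -{1}(orders_add n i); apply: symmetric_brk => //.
  + exact: multilinear_opart.
  + exact: symmetric_opart.
Qed.

End Bracket.

Section Projection.
Variables (K : fieldType) (G : lmodType K).
Variables (par : bool -> G -> G) (br : G -> G -> G) (pH : G -> G).
Hypothesis pH_lin : linear pH.
Hypothesis pH_idem : forall x, pH (pH x) = pH x.
Hypothesis pH_graded : forall b x, pH (par b (pH x)) = par b (pH x).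
Hypothesis pH_br : forall x y, pH (br (pH x) (pH y)) = br (pH x) (pH y).
Implicit Types (A B : Op G) (xs : seq G).

Definition H_valued A := forall xs, pH (A xs) = A xs.

Lemma H_valued_bullet m A z : H_valued A -> H_valued (bullet m A z).
Proof. by move=> A_H ys; rewrite /bullet linear_fixedZ. Qed.

Lemma H_valued_brk p q b A B :
  H_valued A -> H_valued B -> H_valued (fun xs => brk par br xs p q b A B).
Proof.
move=> + + xs; elim: xs p q b A B => [|x xs IH] p q b A B A_H B_H /=.
  by rewrite -A_H -B_H pH_br.
apply: (linear_fixedZ pH_lin); apply: (linear_fixed_sum pH_lin) => c.
rewrite (linear_mapD pH_lin) (linear_mapZ pH_lin); congr (_ + _ *: _).
  case: q => [|q]; first exact: (linear_map0 pH_lin).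
  by apply: IH => //; apply: H_valued_bullet.
case: p => [|p]; first exact: (linear_map0 pH_lin).
by apply: IH => //; apply: H_valued_bullet.
Qed.

Lemma H_valued_opart b B : H_valued B -> H_valued (opart par b B).
Proof.
move=> + xs; elim: xs b B => [|x xs IH] b B B_H /=; first by rewrite -B_H pH_graded.
by apply: linear_fixed_sum => // c; apply: IH => ys.
Qed.

Lemma H_valued_Ubr (A B : Uop G) n :
  (forall p, H_valued (A p)) -> (forall p, H_valued (B p)) -> H_valued (Ubr par br A B n).
Proof.
move=> A_H B_H xs; apply: linear_fixed_sum => // i; apply: linear_fixed_sum => // b.
by apply: (H_valued_brk _ _ _ (A_H i)); apply: H_valued_opart.
Qed.

Lemma H_valued_UprojH (A : Uop G) p : H_valued (UprojH pH A p).
Proof. by move=> xs; apply: pH_idem. Qed.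

Lemma UprojH_in_S (A : Uop G) : in_S par A -> in_S par (UprojH pH A).
Proof.
move=> [[A_ml [N A_fin]] A_sym]; split; first split.
- by move=> p xs ys k u v sz; rewrite /UprojH A_ml // pH_lin.
- by exists N => p p_ge xs sz; rewrite /UprojH A_fin // linear_map0.
- by move=> p xs ys u v c d sz; rewrite /UprojH A_sym // linear_mapZ.
Qed.

End Projection.

Theorem proposition5p1 (K : fieldType) (G : lmodType K)
    (par : bool -> G -> G) (br : G -> G -> G) (pH : G -> G) :
  [pchar K] =i pred0 ->
  is_lie_superalgebra par br ->
  is_subalgebra_decomp par br pH ->
  forall A B : Uop G, in_S par A -> in_S par B ->
    Ueq (Ubr par br (UprojH pH A) (UprojH pH B))
        (UprojH pH (Ubr par br (UprojH pH A) (UprojH pH B)))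
    /\ (exists C : Uop G, in_S par C /\
          Ueq (Ubr par br (UprojH pH A) (UprojH pH B)) (UprojH pH C)).
Proof.
move=> _ [[par_lin par_idem par_orth _] [br_linl br_linr _ _ _]]
  [pH_lin pH_idem pH_graded pH_br] A B A_S B_S.
have bracket_H_valued : Ueq (Ubr par br (UprojH pH A) (UprojH pH B))
                            (UprojH pH (Ubr par br (UprojH pH A) (UprojH pH B))).
  by move=> n xs _; rewrite /UprojH H_valued_Ubr //; apply: H_valued_UprojH.
split=> //; exists (Ubr par br (UprojH pH A) (UprojH pH B)); split=> //.
by apply: Ubr_in_S => //; apply: UprojH_in_S.
Qed.
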